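(* Let $G=(V,E)$ be a locally finite, connected, infinite graph. Then $p_{\mathrm{cut,E}}\le p_{\mathrm{cut,V}}$. If moreover $G$ has bounded degree, then $p_{\mathrm{cut,E}}=p_{\mathrm{cut,V}}$.
   Context: Fix a vertex $x$ (the thresholds do not depend on $x$). Consider Bernoulli$(p)$ bond percolation on $G$ (each edge open independently with probability $p$), with law $\mathbb{P}_p$, expectation $\mathbb{E}_p$, and open cluster $C(x)$ of $x$. A vertex cutset separating $x$ from infinity is a set $\Pi_V\subset V$ such that the connected component of $x$ in $G$ with the vertices of $\Pi_V$ deleted is finite; an edge cutset is a set $\Pi_E\subset E$ such that the component of $x$ in $G$ with the edges of $\Pi_E$ deleted is finite. Define $p_{\mathrm{cut,E}}=\sup\{p\ge0:\inf_{\Pi_E}\mathbb{E}_p[|C(x)\cap\Pi_E|]=0\}$, where $C(x)\cap\Pi_E$ is the set of edges of $C(x)$ lying in $\Pi_E$ and the infimum is over all edge cutsets separating $x$ from infinity, and $p_{\mathrm{cut,V}}=\sup\{p\ge0:\inf_{\Pi_V}\mathbb{E}_p[|C(x)\cap\Pi_V|]=0\}$, where $C(x)\cap\Pi_V$ is the set of vertices of $C(x)$ in $\Pi_V$ and the infimum is over all vertex cutsets separating $x$ from infinity. *)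

From HB Require Import structures.
From mathcomp Require Import all_boot all_order all_algebra.
From mathcomp Require Import all_classical all_reals all_analysis.
From Stdlib Require Import Relations.Relation_Operators.
From Stdlib Require List.
Import Order.TTheory GRing.Theory Num.Theory.

Set Implicit Arguments.
Unset Strict Implicit.
Unset Printing Implicit Defensive.

Local Open Scope classical_set_scope.
Local Open Scope ring_scope.

Section Graph.
Context {V : Type} (adj : V -> V -> Prop).

Definition simple_graph : Prop :=
  (forall u v, adj u v -> adj v u) /\ (forall u, ~ adj u u).

Definition locally_finite : Prop := forall v, finite_set [set w | adj v w].

Definition connected_graph : Prop := forall u v, clos_refl_trans V adj u v.

Definition bounded_degree : Prop :=
  exists D : nat, forall (v : V) (s : seq V), List.NoDup s ->
    (forall w, List.In w s -> adj v w) -> (size s <= D)%N.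

Definition is_edge (s : set V) : Prop :=
  exists u v, adj u v /\ s = [set w | w = u \/ w = v].

Definition edge := {s : set V | is_edge s}.

Definition open_adj (om : edge -> bool) (u v : V) : Prop :=
  exists e : edge, om e /\ proj1_sig e u /\ proj1_sig e v /\ u <> v.

Definition cluster (om : edge -> bool) (x : V) : set V :=
  [set y | clos_refl_trans V (open_adj om) x y].

Definition cluster_edges (om : edge -> bool) (x : V) : set edge :=
  [set e | om e /\ forall u, proj1_sig e u -> cluster om x u].

(* Pi separates x from infinity: the component of x in G minus Pi is finite
   (if x is in Pi, the relation below only yields {x}, also finite). *)
Definition vertex_cutset (x : V) (Pi : set V) : Prop :=
  finite_set [set y | clos_refl_trans V
     (fun u v => adj u v /\ ~ Pi u /\ ~ Pi v) x y].

Definition edge_cutset (x : V) (Pi : set edge) : Prop :=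
  finite_set [set y | clos_refl_trans V
     (fun u v => exists e : edge, ~ Pi e /\ proj1_sig e u /\ proj1_sig e v /\ u <> v) x y].

Context {R : realType} {d : measure_display} {Omega : measurableType d}.

(* Bernoulli(p) bond percolation realised on (Omega, P): om e w is the state
   of edge e; edges are open independently with probability p
   (product rule on every finite family of distinct edges). *)
Definition bernoulli_bond (P : probability Omega R) (om : edge -> Omega -> bool)
  (p : R) : Prop :=
  (forall e, measurable [set w | om e w]) /\
  forall (s : seq edge) (a : edge -> bool), List.NoDup s ->
    P [set w | forall e, List.In e s -> om e w = a e] =
    ((\prod_(e <- s) (if a e then p else 1 - p))%:E).

(* E_p[|C(x) /\ Pi_V|] and E_p[|C(x) /\ Pi_E|] (cardinalities in [0, +oo]) *)
Definition exp_vertex (P : probability Omega R) (om : edge -> Omega -> bool)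
  (x : V) (Pi : set V) : \bar R :=
  (\int[P]_w (\esum_(y in (cluster (fun e => om e w) x `&` Pi : set {classic V})) 1))%E.

Definition exp_edge (P : probability Omega R) (om : edge -> Omega -> bool)
  (x : V) (Pi : set edge) : \bar R :=
  (\int[P]_w (\esum_(e in (cluster_edges (fun e => om e w) x `&` Pi : set {classic edge})) 1))%E.

(* thresholds; P p, om p is the Bernoulli(p) percolation for p in [0,1] *)
Definition pcut_V (P : R -> probability Omega R) (om : R -> edge -> Omega -> bool)
  (x : V) : R :=
  sup [set p : R | 0 <= p <= 1 /\
    ereal_inf [set exp_vertex (P p) (om p) x Pi | Pi in vertex_cutset x] = 0%E].

Definition pcut_E (P : R -> probability Omega R) (om : R -> edge -> Omega -> bool)
  (x : V) : R :=
  sup [set p : R | 0 <= p <= 1 /\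
    ereal_inf [set exp_edge (P p) (om p) x Pi | Pi in edge_cutset x] = 0%E].

End Graph.

From Pilot Require Import Defs.
From HB Require Import structures.
From mathcomp Require Import all_boot all_order all_algebra.
From mathcomp Require Import all_classical all_reals all_analysis.
From Stdlib Require Import Relations.Relation_Operators Relations.Operators_Properties.
From Stdlib Require List.
From mathcomp Require Import measurable_realfun.
Import Order.TTheory GRing.Theory Num.Theory.
Local Open Scope classical_set_scope.
Local Open Scope ring_scope.

(* By Tonelli, E_p|C(x) ∩ Π| is the sum over Π of the probabilities that each
   element of Π lies in C(x).  An open edge lies in C(x) only if its endpoints
   do, so the edges incident to a vertex cutset form an edge cutset whose
   expected count is at most D times that of the vertex cutset when degrees are
   bounded by D.  Conversely, the endpoints of an edge cutset form a vertex
   cutset.  If y ∈ C(x) and y ∈ e, then either y is joined to x by an open path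
   avoiding e, an event independent of the state of e that puts e into C(x)
   once e is open, or e itself lies in C(x); hence
   P(y ∈ C(x)) ≤ (1 + 1/p) P(e ∈ C(x)).  Thus for p > 0 a vanishing infimum over
   edge cutsets forces one over vertex cutsets, and the converse holds under
   bounded degree; comparing the suprema gives both claims. *)

Set Implicit Arguments.
Unset Strict Implicit.
Unset Printing Implicit Defensive.

Lemma eq_prod_In (R : comPzSemiRingType) (T : Type) (s : seq T) (F G : T -> R) :
  (forall x, List.In x s -> F x = G x) -> \prod_(x <- s) F x = \prod_(x <- s) G x.
Proof.
elim: s => [|a s IH] FG; first by rewrite !big_nil.
by rewrite !big_cons FG /=; [rewrite IH // => x sx; apply: FG; right|left].
Qed.

Lemma exists_NoDup_eq_In (T : Type) (l : seq T) :
  exists s, List.NoDup s /\ forall x, List.In x s <-> List.In x l.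
Proof.
elim: l => [|a l [s [nd sl]]]; first by exists [::]; split => //; constructor.
have [sa|sa] := pselect (List.In a s).
  exists s; split => // x; rewrite sl /=; split; [by right|].
  by case=> [<-|//]; rewrite -sl.
by exists (a :: s); split; [constructor|move=> x /=; rewrite sl].
Qed.

Lemma uniq_NoDup (T : eqType) (s : seq T) : uniq s -> List.NoDup s.
Proof.
elim: s => [|a s IH] /=; first by constructor.
case/andP=> ha hs; constructor; last exact: IH.
move=> hIn; move/negP: ha; apply.
elim: s hIn {IH hs} => // b s IH [->|h]; rewrite in_cons ?eqxx //.
by rewrite IH ?orbT.
Qed.

Lemma In_mem (T : eqType) (s : seq T) z : List.In z s -> z \in s.
Proof. by elim: s => // b s IH [->|/IH h]; rewrite in_cons ?eqxx // h orbT. Qed.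

Section Reachability.
Context {V : Type}.

Fixpoint reachn (r : V -> V -> Prop) (x : V) (n : nat) (y : V) : Prop :=
  match n with
  | 0 => x = y
  | n'.+1 => reachn r x n' y \/ exists z, reachn r x n' z /\ r z y
  end.

Lemma clos_rt_reachnP r x y :
  clos_refl_trans V r x y <-> exists n, reachn r x n y.
Proof.
split.
  move/clos_rt_rtn1_iff; elim=> [|u v ruv _ [n Hn]]; first by exists 0%N.
  by exists n.+1; right; exists u.
case=> n; elim: n y => [y /= <-|n IH y /= [/IH//|[z [/IH xz rzy]]]].
  exact: rt_refl.
exact: rt_trans xz (rt_step _ _ _ _ rzy).
Qed.

Lemma clos_rt_mono (r1 r2 : V -> V -> Prop) x y :
  (forall u v, r1 u v -> r2 u v) ->
  clos_refl_trans V r1 x y -> clos_refl_trans V r2 x y.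
Proof.
move=> r12; elim=> [u v /r12|u|u v w _ IH1 _ IH2]; [exact: rt_step|exact: rt_refl|].
exact: rt_trans IH1 IH2.
Qed.

Context (adj : V -> V -> Prop).

Lemma reachn_finite x n :
  locally_finite adj -> finite_set [set y | reachn adj x n y].
Proof.
move=> lf; elim: n => [|n IH].
  by rewrite (_ : [set y | _] = [set x]) ?finite_set1 //; apply/seteqP; split=> y /=.
rewrite (_ : [set y | _] = [set y | reachn adj x n y] `|`
   \bigcup_(z in [set y | reachn adj x n y]) [set y | adj z y]).
  by rewrite finite_setU; split=> //; apply: bigcup_finite.
apply/seteqP; split=> y /=.
  by case=> [H|[z [Hz Hy]]]; [left|right; exists z].
by case=> [H|[z Hz Hy]]; [left|right; exists z].
Qed.

Lemma locally_finite_connected_countable (x : V) :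
  locally_finite adj -> connected_graph adj -> countable [set: V].
Proof.
move=> lf cg.
rewrite (_ : [set: V] = \bigcup_(n in [set: nat]) [set y | reachn adj x n y]).
  by apply: bigcup_countable => // n _; apply/finite_set_countable/reachn_finite.
apply/seteqP; split=> y // _.
by have [n Hn] := (clos_rt_reachnP adj x y).1 (cg x y); exists n.
Qed.

End Reachability.

Section Edges.
Context {V : Type} (adj : V -> V -> Prop).
Implicit Types e : edge adj.

Lemma edge_ends e : exists uv : V * V,
  adj uv.1 uv.2 /\ proj1_sig e = [set w | w = uv.1 \/ w = uv.2].
Proof. by case: e => s [u [v [huv E]]]; exists (u, v). Qed.

Lemma edge_mem_ends e a b w : proj1_sig e a -> proj1_sig e b -> a <> b ->
  proj1_sig e w -> w = a \/ w = b.
Proof.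
have [[u v] [/= _ ->]] := edge_ends e.
by move=> /= [->|->] [->|->] // _ [->|->]; tauto.
Qed.

Lemma eq_edge e1 e2 a b : proj1_sig e1 a -> proj1_sig e1 b ->
  proj1_sig e2 a -> proj1_sig e2 b -> a <> b -> e1 = e2.
Proof.
move=> e1a e1b e2a e2b ab.
have ends e : proj1_sig e a -> proj1_sig e b -> proj1_sig e = [set w | w = a \/ w = b].
  move=> ea eb; apply/seteqP; split=> w /=; first exact: edge_mem_ends.
  by case=> ->.
move: (ends _ e1a e1b) (ends _ e2a e2b); clear e1a e1b e2a e2b.
case: e1 e2 => [s1 p1] [s2 p2] /= E1 E2; subst s1 s2.
by congr exist; apply: Prop_irrelevance.
Qed.

Definition mk_edge u v (huv : adj u v) : edge adj :=
  exist _ [set w | w = u \/ w = v] (ex_intro _ u (ex_intro _ v (conj huv erefl))).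

Hypothesis sg : simple_graph adj.

Lemma adj_neq u v : adj u v -> u <> v.
Proof. by case: sg => _ irr huv uv; subst; exact: irr huv. Qed.

Lemma edge_adj e a b : proj1_sig e a -> proj1_sig e b -> a <> b -> adj a b.
Proof.
have [[u v] [/= huv ->]] := edge_ends e.
case: sg => sym _.
by move=> /= [->|->] [->|->] ab //; try exact: sym; exfalso; exact: ab.
Qed.

Lemma edge_other e a : proj1_sig e a -> exists b, proj1_sig e b /\ a <> b.
Proof.
have [[u v] [/= huv ->]] := edge_ends e.
have uv := adj_neq huv.
by move=> /= [->|->]; [exists v|exists u]; split; auto.
Qed.

Lemma countable_edges : countable [set: V] -> countable [set: edge adj].
Proof.
move=> cV; have /countable_injP[k kinj] : countable [set: V * V].
  by rewrite -setXTT; apply: countableX.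
pose ends e : V * V := proj1_sig (cid (edge_ends e)).
apply/countable_injP; exists (k \o ends) => e1 e2 _ _ /= /kinj.
rewrite !inE => /(_ I I).
rewrite /ends; case: cid => [[u v] [/= huv E1]]; case: cid => [[u' v'] [/= _ E2]] [? ?].
subst u' v'; apply: (@eq_edge _ _ u v); rewrite ?E1 ?E2 /=; auto.
exact: adj_neq.
Qed.

End Edges.

Section Cutsets.
Context {V : Type} (adj : V -> V -> Prop) (sg : simple_graph adj) (x : V).

Definition incident_edges (PiV : set V) : set (edge adj) :=
  [set e | exists2 y, PiV y & proj1_sig e y].

Definition endpoints (PiE : set (edge adj)) : set V :=
  [set y | exists2 e, PiE e & proj1_sig e y].

Lemma incident_edges_cutset PiV :
  vertex_cutset adj x PiV -> edge_cutset x (incident_edges PiV).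
Proof.
apply: sub_finite_set => y /=; apply: clos_rt_mono => u v [e [nE [eu [ev uv]]]].
split; first exact: (edge_adj sg eu ev uv).
by split=> h; apply: nE; [exists u|exists v].
Qed.

Lemma endpoints_cutset PiE :
  edge_cutset x PiE -> vertex_cutset adj x (endpoints PiE).
Proof.
apply: sub_finite_set => y /=; apply: clos_rt_mono => u v [uv [nu _]].
have u_v := adj_neq sg uv.
exists (mk_edge uv); split; first by move=> PiEuv; apply: nu; exists (mk_edge uv) => //; left.
by split; [left|split; [right|]].
Qed.

End Cutsets.

Section ClusterWithoutEdge.
Context {V : Type} (adj : V -> V -> Prop) (c : edge adj -> bool) (e : edge adj).
Context (x : V).

Definition close_edge : edge adj -> bool := fun f => c f && `[< f <> e >].

Lemma cluster_close_edge_sub : Defs.cluster close_edge x `<=` Defs.cluster c x.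
Proof.
move=> y; apply: clos_rt_mono => u v [f [cf uv]]; exists f; split => //.
by case/andP: cf.
Qed.

Lemma cluster_edges_close_edge y : proj1_sig e y -> c e ->
  Defs.cluster close_edge x y -> cluster_edges c x e.
Proof.
move=> ey ce /cluster_close_edge_sub xy; split => // z ez.
have [<-//|yz] := pselect (y = z).
by apply: rt_trans xy (rt_step _ _ _ _ _); exists e.
Qed.

Lemma cluster_close_edgeVedges y : Defs.cluster c x y ->
  Defs.cluster close_edge x y \/ cluster_edges c x e.
Proof.
move/clos_rt_rtn1_iff; elim=> [|u v [f [cf [fu [fv uv]]]] /clos_rt_rtn1_iff xu].
  by left; exact: rt_refl.
case=> [xu'|]; last by right.
have [fe|fe] := pselect (f = e); last first.
  left; apply: rt_trans xu' (rt_step _ _ _ _ _); exists f; split => //.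
  by rewrite /close_edge cf asboolT.
right; subst f; split => // z ez.
case: (edge_mem_ends fu fv uv ez) => -> //.
by apply: rt_trans xu (rt_step _ _ _ _ _); exists e.
Qed.

End ClusterWithoutEdge.

Section ExtendedSums.
Local Open Scope ereal_scope.
Context {R : realType}.

Lemma natr_mulSe (k : nat) (a : \bar R) : 0 <= a ->
  (k.+1%:R)%:E * a = (k%:R)%:E * a + a.
Proof. by move=> a0; rewrite -addn1 natrD EFinD ge0_muleDl // mul1e. Qed.

Lemma sum_cst_seq (T : Type) (s : seq T) (c : \bar R) : 0 <= c ->
  \sum_(z <- s) c = ((size s)%:R)%:E * c.
Proof.
move=> c0; elim: s => [|a s IH]; first by rewrite big_nil mul0e.
by rewrite big_cons IH /= natr_mulSe // addeC.
Qed.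

Lemma esumZnl (T : choiceType) (S : set T) (a : T -> \bar R) (k : nat) :
  (forall i, 0 <= a i) ->
  \esum_(i in S) ((k%:R)%:E * a i) = (k%:R)%:E * \esum_(i in S) a i.
Proof.
move=> a0; elim: k => [|k IH].
  by rewrite mul0e; apply: esum1 => i _; rewrite mul0e.
rewrite natr_mulSe; last exact: esum_ge0.
rewrite -IH -esumD //; first by apply: eq_esum => i _; rewrite natr_mulSe.
by move=> i _; apply: mule_ge0.
Qed.

Lemma le_esum_subset (T : choiceType) (S1 S2 : set T) (a : T -> \bar R) :
  (forall i, 0 <= a i) -> S1 `<=` S2 ->
  \esum_(i in S1) a i <= \esum_(i in S2) a i.
Proof.
move=> a0 sub; rewrite [leLHS]esum_mkcond [leRHS]esum_mkcond.
apply: le_esum => i _; case: ifPn => h; last by case: ifP.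
by rewrite ifT //; move: h; rewrite !inE; exact: sub.
Qed.

Lemma le_esum_term (T : choiceType) (S : set T) (a : T -> \bar R) (t : T) :
  (forall i, 0 <= a i) -> S t -> a t <= \esum_(i in S) a i.
Proof.
by move=> a0 St; rewrite -(@esum_set1 R T t a (a0 t)); apply: le_esum_subset => // i ->.
Qed.

Lemma esum_cst_le_pair (T : choiceType) (S : set T) (u v : T) (c : \bar R) :
  0 <= c -> S `<=` [set u; v] -> \esum_(i in S) c <= (2%:R)%:E * c.
Proof.
move=> c0 sub; rewrite natr_mulSe // mul1e.
apply: (@le_trans _ _ (\esum_(i in [set: T])
   ((if i \in [set u] then c else 0) + (if i \in [set v] then c else 0)))).
  rewrite esum_mkcond; apply: le_esum => i _.
  case: ifPn => h; last by apply: adde_ge0; case: ifP.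
  move: (sub i); rewrite inE in h => /(_ h) [hu|hv].
    by rewrite ifT ?inE // leeDl //; case: ifP.
  by rewrite [X in _ <= _ + X]ifT ?inE // leeDr //; case: ifP.
rewrite esumD; [|by move=> i _; case: ifP..].
by rewrite -!esum_mkcond !esum_set1.
Qed.

Lemma esum_esum_swap (T1 T2 : choiceType) (I : set T1) (J : set T2)
  (r : T1 -> T2 -> Prop) (a : T1 -> T2 -> \bar R) : (forall i j, 0 <= a i j) ->
  \esum_(i in I) \esum_(j in [set j | J j /\ r i j]) a i j =
  \esum_(j in J) \esum_(i in [set i | I i /\ r i j]) a i j.
Proof.
move=> a0; rewrite !esum_esum //.
rewrite (reindex_esum (J `*`` (fun j => [set i | I i /\ r i j]))
  (I `*`` (fun i => [set j | J j /\ r i j])) (fun k => (k.2, k.1))) //.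
split.
- by move=> [j i] /= [Jj [Ii rij]]; split.
- by move=> [j1 i1] [j2 i2] _ _ /= [-> ->].
- by move=> [i j] /= [Ii [Jj rij]]; exists (j, i).
Qed.

Lemma esum_nneseries (I : choiceType) (S : set I) (h : I -> nat)
  (hinj : {in [set: I] &, injective h}) (i0 : I) (Si0 : S i0)
  (a : I -> \bar R) : (forall i, 0 <= a i) ->
  \esum_(i in S) a i =
  \sum_(n <oo) (if n \in h @` S then a (xget i0 [set i | S i /\ h i = n]) else 0).
Proof.
move=> a0; pose g n := xget i0 [set i | S i /\ h i = n].
have gh i : S i -> g (h i) = i.
  move=> Si; have := @xgetPex _ i0 [set j | S j /\ h j = h i] (ex_intro _ i (conj Si erefl)).
  by case=> _ /hinj; apply; rewrite inE.
rewrite (reindex_esum (h @` S) S g); last first.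
  split.
  - by move=> _ [i Si <-]; rewrite /= gh.
  - by move=> n1 n2; rewrite !inE => -[i Si <-] [j Sj <-]; rewrite !gh // => ->.
  - by move=> i Si; exists (h i) => //=; [exists i|exact: gh].
rewrite -eseries_mkcond -(set_mem_set (h @` S)) nneseries_esum //.
by rewrite !set_mem_set.
Qed.

Lemma integral_esum d (T : measurableType d) (mu : {measure set T -> \bar R})
  (I : choiceType) (S : set I) (cI : countable [set: I])
  (f : I -> T -> \bar R) (mf : forall i, measurable_fun setT (f i))
  (f0 : forall i t, 0 <= f i t) :
  \int[mu]_t (\esum_(i in S) f i t) = \esum_(i in S) \int[mu]_t f i t.
Proof.
have [->|/set0P[i0 Si0]] := eqVneq S set0.
  rewrite esum_set0; under eq_integral do rewrite esum_set0.
  exact: integral0.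
case/countable_injP: cI => h hinj.
rewrite (esum_nneseries hinj Si0); last by move=> i; exact: integral_ge0.
under eq_integral do rewrite (esum_nneseries hinj Si0) //.
rewrite integral_nneseries //.
- apply: eq_eseriesr => n _; case: ifP => _ //.
  exact: (integral0 mu setT).
- by move=> n; case: (n \in _) => /=; [exact: mf|exact: measurable_cst].
- by move=> n t _; case: (n \in _).
Qed.

Lemma integral_esum_indic d (T : measurableType d)
  (mu : {measure set T -> \bar R}) (I : choiceType) (cI : countable [set: I])
  (A : I -> set T) (mA : forall i, measurable (A i)) (S : set I) :
  \int[mu]_w (\esum_(i in [set i | A i w] `&` S) 1) = \esum_(i in S) mu (A i).
Proof.
transitivity (\int[mu]_w \esum_(i in S) (\1_(A i) w)%:E).
  apply: eq_integral => w _; rewrite esum_mkcondl; apply: eq_esum => i _.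
  by rewrite indicE; have [h|h] := pselect (A i w); [rewrite !mem_set|rewrite !memNset].
rewrite integral_esum //.
- by apply: eq_esum => i _; rewrite integral_indic ?setIT.
- by move=> i; apply/measurable_EFinP; apply: measurable_indic.
Qed.

End ExtendedSums.

Section BoundedDegree.
Context {V : Type} (adj : V -> V -> Prop).

Definition max_degree_le (D : nat) : Prop :=
  forall (v : V) (s : seq V), List.NoDup s ->
    (forall w, List.In w s -> adj v w) -> (size s <= D)%N.

Context (sg : simple_graph adj) (lf : locally_finite adj) (D : nat).
Hypothesis deg_le : max_degree_le D.

Lemma esum_incident_edges_le {R : realType} (y : V) (c : \bar R) : (0 <= c)%E ->
  (\esum_(e in [set e : {classic edge adj} | proj1_sig e y]) c <= (D%:R)%:E * c)%E.
Proof.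
move=> c0.
pose other (e : {classic edge adj}) : {classic V} :=
  xget (y : {classic V}) [set z : {classic V} | proj1_sig e z /\ z <> y].
have otherP e : proj1_sig e y -> proj1_sig e (other e) /\ other e <> y.
  move=> ey; have [b [eb yb]] := edge_other sg ey.
  exact: (@xgetPex _ (y : {classic V}) [set z : {classic V} | proj1_sig e z /\ z <> y]
    (ex_intro _ b (conj eb (nesym yb)))).
have other_inj : set_inj [set e : {classic edge adj} | proj1_sig e y] other.
  move=> e1 e2; rewrite !inE /= => e1y e2y E.
  have [e1o1 o1y] := otherP _ e1y; have [e2o2 o2y] := otherP _ e2y.
  rewrite E in e1o1; exact: (eq_edge e1y e1o1 e2y e2o2 (nesym o2y)).
rewrite -(esum_image _ other (fun=> c) other_inj).
apply: (@le_trans _ _ (\esum_(z in [set z : {classic V} | adj y z]) c)).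
  apply: le_esum_subset => // _ [e ey <-]; have [eo oy] := otherP _ ey.
  exact: (edge_adj sg ey eo (nesym oy)).
rewrite esum_fset // fsbig_finite //= sum_cst_seq //.
apply: lee_wpmul2r => //; rewrite lee_fin ler_nat.
apply: (@deg_le y (finmap.enum_fset (fset_set [set z : {classic V} | adj y z]))).
  exact/(@uniq_NoDup {classic V})/finmap.fset_uniq.
by move=> w /(@In_mem {classic V}); rewrite in_fset_set // inE.
Qed.

End BoundedDegree.

Section ClusterMeasurable.
Context {V : Type} (adj : V -> V -> Prop) {d : measure_display} {T : measurableType d}.
Context (c : edge adj -> T -> bool).

Lemma measurable_cst_set (Q : Prop) : measurable [set _ : T | Q].
Proof.
have [q|nq] := pselect Q.
  by rewrite (_ : [set _ | Q] = setT) //; apply/seteqP; split.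
by rewrite (_ : [set _ | Q] = set0) //; apply/seteqP; split.
Qed.

Lemma measurable_close_edge e :
  (forall f, f <> e -> measurable [set w | c f w]) ->
  forall f, measurable [set w | close_edge (c^~ w) e f].
Proof.
move=> mc f; have [->|fe] := pselect (f = e).
  rewrite (_ : [set w | _] = set0); first exact: measurable0.
  by apply/seteqP; split=> w //=; rewrite /close_edge asboolF ?andbF.
rewrite (_ : [set w | _] = [set w | c f w]); first exact: mc.
by apply/seteqP; split=> w /=; rewrite /close_edge asboolT ?andbT.
Qed.

Context (cV : countable [set: V]) (cE : countable [set: edge adj]).
Context (mc : forall e, measurable [set w | c e w]).

Lemma measurable_reachn x n y :
  measurable [set w | reachn (open_adj (c^~ w)) x n y].
Proof.
elim: n y => [y|n IH y]; first exact: measurable_cst_set.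
rewrite (_ : [set w | _] = [set w | reachn (open_adj (c^~ w)) x n y] `|`
  \bigcup_(z : V) \bigcup_(e : edge adj)
   ([set w | reachn (open_adj (c^~ w)) x n z] `&` [set w | c e w] `&`
    [set _ | proj1_sig e z /\ proj1_sig e y /\ z <> y])).
  apply: measurableU => //; apply: countable_bigcupT_measurable => // z.
  apply: countable_bigcupT_measurable => // e.
  by apply: measurableI; [apply: measurableI|apply: measurable_cst_set].
apply/seteqP; split=> w /=.
  case=> [H|[z [Hz [e [ce [ez [ey zy]]]]]]]; [by left|right].
  by exists z => //; exists e.
case=> [H|[z _ [e _ [[Hz ce] [ez [ey zy]]]]]]; [by left|right].
by exists z; split => //; exists e.
Qed.

Lemma measurable_cluster x y : measurable [set w | Defs.cluster (c^~ w) x y].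
Proof.
rewrite (_ : [set w | _] = \bigcup_n [set w | reachn (open_adj (c^~ w)) x n y]).
  by apply: bigcupT_measurable => n; exact: measurable_reachn.
apply/seteqP; split=> w /=; rewrite /Defs.cluster /= clos_rt_reachnP.
  by case=> n Hn; exists n.
by case=> n _ Hn; exists n.
Qed.

Lemma measurable_cluster_edges x e :
  measurable [set w | cluster_edges (c^~ w) x e].
Proof.
have [[u v] [/= _ E]] := edge_ends e.
rewrite (_ : [set w | _] = [set w | c e w] `&` [set w | Defs.cluster (c^~ w) x u]
   `&` [set w | Defs.cluster (c^~ w) x v]).
  by apply: measurableI; [apply: measurableI => //|]; exact: measurable_cluster.
apply/seteqP; split=> w /=; rewrite /cluster_edges /= E /=.
  by case=> ce H; split; [split=> //|]; apply: H; [left|right].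
by case=> [[ce Hu] Hv]; split=> // w' [->|->].
Qed.

End ClusterMeasurable.

Section EdgeIndependence.
Local Open Scope ereal_scope.
Context {V : Type} (adj : V -> V -> Prop) {R : realType} {d : measure_display}.
Context {Omega : measurableType d} (P : probability Omega R).
Context (om : edge adj -> Omega -> bool) (p : R) (bb : bernoulli_bond P om p).
Context (e : edge adj).

Definition cylinder (l : seq (edge adj * bool)) : set Omega :=
  [set w | forall q, List.In q l -> om q.1 w = q.2].

Definition cylinders_avoiding : set (set Omega) :=
  [set A | exists l, (forall q, List.In q l -> q.1 <> e) /\ A = cylinder l].

Definition edge_open : set Omega := [set w | om e w].

Lemma cylinders_avoiding_setI : setI_closed cylinders_avoiding.
Proof.
move=> A B [l1 [H1 ->]] [l2 [H2 ->]]; exists (l1 ++ l2); split.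
  by move=> q /List.in_app_iff [/H1|/H2].
apply/seteqP; split=> w /=.
  by case=> h1 h2 q /List.in_app_iff [/h1|/h2].
by move=> h; split=> q hq; apply: h; apply/List.in_app_iff; [left|right].
Qed.

Lemma measurable_edge_state (f : edge adj) (b : bool) :
  measurable [set w | om f w = b].
Proof.
case: bb => mom _; case: b.
  by rewrite (_ : [set w | _] = [set w | om f w]) //; apply/seteqP; split=> w.
rewrite (_ : [set w | _] = ~` [set w | om f w]); first exact: measurableC.
by apply/seteqP; split=> w /=; case: (om f w).
Qed.

Lemma measurable_cylinder l : measurable (cylinder l).
Proof.
elim: l => [|q l IH].
  by rewrite (_ : cylinder _ = setT) //; apply/seteqP; split=> w //= _ q [].
rewrite (_ : cylinder _ = [set w | om q.1 w = q.2] `&` cylinder l).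
  exact: measurableI (measurable_edge_state _ _) IH.
apply/seteqP; split=> w /=.
  by move=> h; split; [apply: h; left|move=> q' hq'; apply: h; right].
by case=> h1 h2 q' [<-|/h2].
Qed.

Lemma measurable_edge_open : measurable edge_open.
Proof. by case: bb => + _; apply. Qed.

Lemma probability_edge_open : P edge_open = p%:E.
Proof.
case: bb => _ pr.
have := pr [:: e] (fun _ => true) (List.NoDup_cons _ (@List.in_nil _ e) (List.NoDup_nil _)).
rewrite big_cons big_nil mulr1 => <-; congr (P _).
apply/seteqP; split=> w /=; first by move=> h f [<-|//].
by move=> h; apply: h; left.
Qed.

(* A nonempty cylinder is the event that a duplicate-free list of edges takes
   the states they have at one of its points, so the product rule applies to it
   with and without the extra constraint that e be open. *)
Lemma cylinder_indep l : (forall q, List.In q l -> q.1 <> e) ->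
  P (cylinder l `&` edge_open) = p%:E * P (cylinder l).
Proof.
move=> le.
have [->|/eqP/set0P [w0 lw0]] := pselect (cylinder l = set0).
  by rewrite set0I measure0 mule0.
have [s [nd sl]] := exists_NoDup_eq_In (map fst l).
have ls f : List.In f s -> exists q, List.In q l /\ f = q.1.
  by move/sl/List.in_map_iff => [q [<- hq]]; exists q.
have es : ~ List.In e s by move=> /ls[q [hq E]]; exact: (le q hq (esym E)).
have fe f : List.In f s -> `[< f = e >] = false.
  by move=> sf; apply: asboolF => E; apply: es; rewrite -E.
have E1 : cylinder l = [set w | forall f, List.In f s -> om f w = om f w0].
  apply/seteqP; split=> w /=.
    by move=> h f /ls[q [hq ->]]; rewrite h // lw0.
  move=> h q hq; rewrite h; first exact: lw0.
  by apply/sl/List.in_map_iff; exists q.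
pose a f := if `[< f = e >] then true else om f w0.
have E2 : cylinder l `&` edge_open =
    [set w | forall f, List.In f (e :: s) -> om f w = a f].
  rewrite E1; apply/seteqP; split=> w /=.
    by case=> h1 h2 f [<-|sf]; rewrite /a; [rewrite asboolT|rewrite fe //; exact: h1].
  move=> h; split; last by rewrite /edge_open /= h; [rewrite /a asboolT|left].
  by move=> f sf; rewrite h /a ?fe //; right.
case: bb => _ pr.
rewrite E2 E1 pr; last by constructor.
rewrite pr // big_cons /a asboolT //= EFinM; congr (_ * _%:E).
by apply: eq_prod_In => f sf; rewrite fe.
Qed.

Lemma indep_edge_open_setC S : measurable S ->
  P (S `&` edge_open) = p%:E * P S -> P (~` S `&` edge_open) = p%:E * P (~` S).
Proof.
move=> mS HS; have mO := measurable_edge_open.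
have splitO : P edge_open = P (S `&` edge_open) + P (~` S `&` edge_open).
  rewrite -measureU; [|exact: measurableI|by apply: measurableI => //; exact: measurableC|].
    by rewrite -setIUl setUv setTI.
  by rewrite setIACA setICr set0I.
rewrite probability_setC // muleBr ?mule1 //.
move: splitO; rewrite HS probability_edge_open => {1}->.
by rewrite [p%:E * _ + _]addeC addeK // fin_numM ?fin_num_measure.
Qed.

Lemma indep_edge_open A : <<s cylinders_avoiding >> A ->
  d.-measurable A /\ P (A `&` edge_open) = p%:E * P A.
Proof.
move=> HA.
apply: (@dynkin_induction _ (g_sigma_algebraType cylinders_avoiding)
  cylinders_avoiding
  (fun A : set Omega => d.-measurable A /\ P (A `&` edge_open) = p%:E * P A)) => //.
- exact: cylinders_avoiding_setI.
- by split; [exact: measurableT|rewrite setTI probability_edge_open probability_setT mule1].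
- by move=> _ [l [H ->]]; split; [exact: measurable_cylinder|exact: cylinder_indep].
- move=> S _ [mS HS]; split; first exact: measurableC.
  exact: indep_edge_open_setC.
- move=> F mF tF HF; split; first by apply: bigcup_measurable => n _; exact: (HF n).1.
  rewrite setI_bigcupl measure_bigcup //; last 2 first.
  + by move=> i _; apply: measurableI; [exact: (HF i).1|exact: measurable_edge_open].
  + exact: trivIset_setIr.
  rewrite measure_bigcup //; last by move=> i _; exact: (HF i).1.
  by rewrite -nneseriesZl //; apply: eq_eseriesr => n _; exact: (HF n).2.
Qed.

End EdgeIndependence.

Lemma ereal_inf_eq0_dominated (R : realType) (S1 S2 : set (\bar R)) (K : nat) :
  (forall b, S2 b -> (0 <= b)%E) ->
  (forall a, S1 a -> exists2 b, S2 b & (b <= (K%:R)%:E * a)%E) ->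
  ereal_inf S1 = 0%E -> ereal_inf S2 = 0%E.
Proof.
move=> S20 S12 inf1.
apply/eqP; rewrite eq_le; apply/andP; split; last by apply/ereal_infP => b /S20.
apply/lee_addgt0Pr => eps eps0; rewrite add0e.
have K1 : 0 < K.+1%:R :> R by rewrite ltr0Sn.
have fin1 : ereal_inf S1 \is a fin_num by rewrite inf1.
have [a S1a] := lb_ereal_inf_adherent (divr_gt0 eps0 K1) fin1.
rewrite inf1 add0e => alt; have [b S2b ble] := S12 a S1a.
apply: le_trans (ereal_inf_lbound S2b) _; apply: (le_trans ble).
apply: (@le_trans _ _ ((K%:R)%:E * (eps / K.+1%:R)%:E)%E).
  by apply: lee_wpmul2l; [rewrite lee_fin|exact: ltW].
by rewrite -EFinM lee_fin mulrA ler_pdivrMr // mulrC ler_pM2l // ler_nat.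
Qed.

Lemma le_sup_pos_subset (R : realType) (A B : set R) :
  (forall q, A q -> 0 <= q <= 1) -> (forall q, B q -> 0 <= q <= 1) ->
  (forall q, A q -> 0 < q -> B q) -> sup A <= sup B.
Proof.
move=> A01 B01 AB.
have ubB : has_ubound B by exists 1 => q /B01 /andP[].
have supB0 : 0 <= sup B.
  have [[q Bq]|nB] := pselect (B !=set0).
    by apply: le_trans (ub_le_sup ubB Bq); case/andP: (B01 q Bq).
  by rewrite (_ : B = set0) ?sup0 //; apply/seteqP; split=> q // Bq; apply: nB; exists q.
have [nA|nA] := pselect (A !=set0); last first.
  by rewrite (_ : A = set0) ?sup0 //; apply/seteqP; split=> q // Aq; apply: nA; exists q.
apply: ge_sup nA _ => q Aq.
have [q0|q0] := ltrP 0 q; first exact: (ub_le_sup ubB (AB q Aq q0)).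
exact: le_trans q0 supB0.
Qed.

Section Percolation.
Local Open Scope ereal_scope.
Context {V : Type} (adj : V -> V -> Prop) (sg : simple_graph adj).
Context (lf : locally_finite adj) (cg : connected_graph adj) (x : V).
Context {R : realType} {d : measure_display} {Omega : measurableType d}.
Context (P : probability Omega R) (om : edge adj -> Omega -> bool) (p : R).
Context (bb : bernoulli_bond P om p).

Let cV : countable [set: V] := locally_finite_connected_countable x lf cg.
Let cE : countable [set: edge adj] := countable_edges sg cV.
Let mom : forall e, measurable [set w | om e w] := bb.1.

Definition vertex_in_cluster y : set Omega := [set w | Defs.cluster (om^~ w) x y].

Definition edge_in_cluster e : set Omega := [set w | cluster_edges (om^~ w) x e].

Lemma exp_vertexE Pi :
  exp_vertex P om x Pi = \esum_(y in (Pi : set {classic V})) P (vertex_in_cluster y).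
Proof.
by rewrite -(integral_esum_indic P (I := {classic V}) cV (measurable_cluster cV cE mom x)).
Qed.

Lemma exp_edgeE Pi :
  exp_edge P om x Pi = \esum_(e in (Pi : set {classic edge adj})) P (edge_in_cluster e).
Proof.
by rewrite -(integral_esum_indic P (I := {classic edge adj}) cE
  (measurable_cluster_edges cV cE mom x)).
Qed.

Lemma measurable_cluster_avoiding e y :
  <<s cylinders_avoiding om e >> [set w | Defs.cluster (close_edge (om^~ w) e) x y].
Proof.
have gen f : f <> e ->
    measurable ([set w | om f w] : set (g_sigma_algebraType (cylinders_avoiding om e))).
  move=> fe; apply: sub_sigma_algebra; exists [:: (f, true)].
  split; first by move=> q [<-|[]].
  by apply/seteqP; split=> w /= h; [move=> q [<-|[]]|apply: (h (f, true)); left].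
exact: measurable_cluster cV cE (measurable_close_edge gen) x y.
Qed.

Lemma probability_vertex_le_edge (N : nat) y e : (1 <= N%:R * p)%R ->
  proj1_sig e y -> P (vertex_in_cluster y) <= (N.+1%:R)%:E * P (edge_in_cluster e).
Proof.
move=> Np ey.
pose B := [set w | Defs.cluster (close_edge (om^~ w) e) x y].
have mB : measurable B.
  exact: measurable_cluster cV cE (measurable_close_edge (fun f _ => mom f)) x y.
have mE := measurable_cluster_edges cV cE mom x e.
have mO := measurable_edge_open bb e.
have [_ PBO] := indep_edge_open bb (@measurable_cluster_avoiding e y).
have AB : vertex_in_cluster y `<=` B `|` edge_in_cluster e.
  by move=> w; apply: cluster_close_edgeVedges.
have BOE : B `&` edge_open om e `<=` edge_in_cluster e.
  by move=> w [Bw Ow]; apply: cluster_edges_close_edge Bw.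
have PB : P B <= (N%:R)%:E * P (edge_in_cluster e).
  apply: (@le_trans _ _ ((N%:R * p)%:E * P B)).
    by rewrite -[leLHS]mul1e; apply: lee_wpmul2r; rewrite ?lee_fin.
  rewrite EFinM -muleA -PBO; apply: lee_wpmul2l; first by rewrite lee_fin.
  by apply: le_measure => //; rewrite inE //; exact: measurableI.
rewrite natr_mulSe //; apply: le_trans (leeD PB (lexx _)).
apply: le_trans (measureU2 _ mB mE).
by apply: le_measure => //; rewrite inE //; [exact: measurable_cluster|exact: measurableU].
Qed.

Lemma exp_edge_incident_le (D : nat) PiV : max_degree_le adj D ->
  exp_edge P om x (incident_edges PiV) <= (D%:R)%:E * exp_vertex P om x PiV.
Proof.
move=> deg_le; rewrite exp_edgeE exp_vertexE.
apply: (@le_trans _ _ (\esum_(e in (incident_edges PiV : set {classic edge adj}))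
   \esum_(y in [set y : {classic V} | PiV y /\ proj1_sig e y]) P (vertex_in_cluster y))).
  apply: le_esum => e [y PiVy ey].
  apply: (@le_trans _ _ (P (vertex_in_cluster y))).
    apply: le_measure; rewrite ?inE; last by move=> w [_]; apply.
      exact: measurable_cluster_edges.
    exact: measurable_cluster.
  by apply: (@le_esum_term R {classic V} _ (fun y => P (vertex_in_cluster y)) y).
rewrite (@esum_esum_swap _ {classic edge adj} {classic V} _ _ (fun e y => proj1_sig e y)
  (fun _ y => P (vertex_in_cluster y))) //.
rewrite -esumZnl //; apply: le_esum => y PiVy.
apply: le_trans (esum_incident_edges_le sg lf deg_le y (measure_ge0 _ _)).
by apply: le_esum_subset => // e [].
Qed.

Lemma exp_vertex_endpoints_le (N : nat) PiE : (1 <= N%:R * p)%R ->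
  exp_vertex P om x (endpoints PiE) <= ((N.+1 * 2)%:R)%:E * exp_edge P om x PiE.
Proof.
move=> Np; rewrite exp_vertexE exp_edgeE.
apply: (@le_trans _ _ (\esum_(y in (endpoints PiE : set {classic V}))
    (N.+1%:R)%:E * \esum_(e in [set e : {classic edge adj} | PiE e /\ proj1_sig e y])
      P (edge_in_cluster e))).
  apply: le_esum => y [e PiEe ey].
  apply: le_trans (probability_vertex_le_edge Np ey) _; apply: lee_wpmul2l => //.
  by apply: (@le_esum_term R {classic edge adj} _ (fun e => P (edge_in_cluster e)) e).
rewrite esumZnl; last by move=> y; exact: esum_ge0.
rewrite (@esum_esum_swap _ {classic V} {classic edge adj} _ _ (fun y e => proj1_sig e y)
  (fun _ e => P (edge_in_cluster e))) //.
rewrite natrM EFinM -muleA; apply: lee_wpmul2l => //.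
rewrite -esumZnl //; apply: le_esum => e _.
have [[u v] [_ E]] := edge_ends e.
apply: (esum_cst_le_pair (measure_ge0 P (edge_in_cluster e))) => y [_].
by rewrite E /= => -[->|->]; [left|right].
Qed.

Lemma inf_exp_vertex_eq0 : (0 < p)%R ->
  ereal_inf [set exp_edge P om x Pi | Pi in edge_cutset x] = 0 ->
  ereal_inf [set exp_vertex P om x Pi | Pi in vertex_cutset adj x] = 0.
Proof.
move=> p0; pose N := Num.Def.archi_bound p^-1.
have Np : (1 <= N%:R * p)%R.
  rewrite -[leLHS](mulVf (lt0r_neq0 p0)) ler_wpM2r ?ltW //.
  by apply: archi_boundP; rewrite invr_ge0 ltW.
apply: (ereal_inf_eq0_dominated (K := (N.+1 * 2)%N)).
- by move=> _ [Pi _ <-]; rewrite exp_vertexE; apply: esum_ge0.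
- move=> _ [Pi cutPi <-]; exists (exp_vertex P om x (endpoints Pi)).
    by exists (endpoints Pi) => //; exact: endpoints_cutset.
  exact: exp_vertex_endpoints_le.
Qed.

Lemma inf_exp_edge_eq0 (D : nat) : max_degree_le adj D ->
  ereal_inf [set exp_vertex P om x Pi | Pi in vertex_cutset adj x] = 0 ->
  ereal_inf [set exp_edge P om x Pi | Pi in edge_cutset x] = 0.
Proof.
move=> deg_le; apply: (ereal_inf_eq0_dominated (K := D)).
- by move=> _ [Pi _ <-]; rewrite exp_edgeE; apply: esum_ge0.
- move=> _ [Pi cutPi <-]; exists (exp_edge P om x (incident_edges Pi)).
    by exists (incident_edges Pi) => //; exact: incident_edges_cutset.
  exact: exp_edge_incident_le.
Qed.

End Percolation.

Theorem lemma2p1 (R : realType) (V : Type) (adj : V -> V -> Prop) (x : V)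
  (d : measure_display) (Omega : measurableType d)
  (P : R -> probability Omega R) (om : R -> edge adj -> Omega -> bool) :
  simple_graph adj -> locally_finite adj -> connected_graph adj ->
  infinite_set [set: V] ->
  (forall p : R, 0 <= p <= 1 -> bernoulli_bond (P p) (om p) p) ->
  pcut_E P om x <= pcut_V P om x /\
  (bounded_degree adj -> pcut_E P om x = pcut_V P om x).
Proof.
move=> sg lf cg _ bb.
have EV : pcut_E P om x <= pcut_V P om x.
  apply: le_sup_pos_subset => [q []|q []|q [q01 infE] q0] //; split => //.
  exact: (inf_exp_vertex_eq0 sg lf cg (bb q q01) q0).
split => // -[D deg_le]; apply/le_anti; rewrite EV /=.
apply: le_sup_pos_subset => [q []|q []|q [q01 infV] _] //; split => //.
exact: (inf_exp_edge_eq0 sg lf cg (bb q q01) deg_le).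
Qed.
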